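(* Let $T$ be an $n\times n$ complex matrix with distinct eigenvalues $\lambda_1,\dots,\lambda_n$. Let $u_1,\dots,u_n$ be unit eigenvectors of $T$ with $Tu_i=\lambda_iu_i$, let $v_1,\dots,v_n$ be unit eigenvectors of $T^*$ with $T^*v_i=\overline{\lambda_i}v_i$, and let $U=(u_1|\cdots|u_n)$ and $V=(v_1|\cdots|v_n)$. If $|\det U|\neq|\det V|$, then $T$ is not unitarily equivalent to a complex symmetric matrix.
   Context: A complex symmetric matrix is a square complex matrix $S$ with $S=S^t$. Two matrices $A,B\in M_n(\mathbb{C})$ are unitarily equivalent if $A=W^*BW$ for some unitary $W$. *)

From HB Require Import structures.
From mathcomp Require Import all_boot all_order all_algebra.
From mathcomp Require Import complex.
From mathcomp Require Import reals.
Set Implicit Arguments. Unset Strict Implicit. Unset Printing Implicit Defensive.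
Import Order.TTheory GRing.Theory Num.Theory.
Local Open Scope ring_scope.

Definition adjmx (C : numClosedFieldType) (m n : nat) (A : 'M[C]_(m, n)) : 'M[C]_(n, m) :=
  map_mx Num.conj (A^T).

Definition unitary_mx (C : numClosedFieldType) (n : nat) (W : 'M[C]_n) : Prop :=
  adjmx W *m W = 1%:M /\ W *m adjmx W = 1%:M.

Definition symmetric_mx (C : numClosedFieldType) (n : nat) (S : 'M[C]_n) : Prop :=
  S^T = S.

Definition unitarily_equivalent (C : numClosedFieldType) (n : nat) (A B : 'M[C]_n) : Prop :=
  exists W : 'M[C]_n, unitary_mx W /\ A = adjmx W *m B *m W.

Definition unit_vec (C : numClosedFieldType) (n : nat) (u : 'cV[C]_n) : Prop :=
  adjmx u *m u = 1%:M.

Definition cols_mx (C : numClosedFieldType) (n : nat) (u : 'I_n -> 'cV[C]_n) : 'M[C]_n :=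
  \matrix_(i < n, j < n) u j i 0.

From HB Require Import structures.
From mathcomp Require Import all_boot all_order all_algebra.
From mathcomp Require Import complex.
From mathcomp Require Import reals.
Set Implicit Arguments. Unset Strict Implicit. Unset Printing Implicit Defensive.
Import Order.TTheory GRing.Theory Num.Theory.
Local Open Scope ring_scope.

(* If T = W^* S W with W unitary and S symmetric, then K := W^* J W, with J
   entrywise conjugation, is an antilinear isometric involution satisfying
   K T = T^* K.  So K maps the unit eigenvector u_k of T to a unit
   eigenvector of T^* for conj(lambda_k); as the eigenvalues are distinct,
   K u_k = c_k v_k with |c_k| = 1.  Taking determinants of the columns,
   |det V| = |det (K u_1 | ... | K u_n)| = |det W|^2 |det U| = |det U|. *)

Section ComplexMatrices.
Variable C : numClosedFieldType.

Lemma adjmxM m n p (A : 'M[C]_(m, n)) (B : 'M[C]_(n, p)) :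
  adjmx (A *m B) = adjmx B *m adjmx A.
Proof. by rewrite /adjmx trmx_mul map_mxM. Qed.

Lemma adjmxK m n (A : 'M[C]_(m, n)) : adjmx (adjmx A) = A.
Proof. by rewrite /adjmx map_trmx trmxK map_mxCK. Qed.

Lemma adjmx_conj m n (A : 'M[C]_(m, n)) : adjmx (map_mx Num.conj A) = A^T.
Proof. by rewrite /adjmx map_trmx map_mxCK. Qed.

Lemma adjmxZ m n (a : C) (A : 'M[C]_(m, n)) :
  adjmx (a *: A) = Num.conj a *: adjmx A.
Proof. by apply/matrixP => i j; rewrite !mxE rmorphM. Qed.

Lemma norm_det_unitary n (W : 'M[C]_n) : unitary_mx W -> `|\det W| = 1.
Proof.
case=> WW _; apply/eqP; rewrite -sqrp_eq1 // normCKC.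
have := congr1 determinant WW; rewrite det_mulmx det1 /adjmx det_map_mx det_tr.
by rewrite mulrC => ->.
Qed.

Lemma unit_vec_neq0 n (v : 'cV[C]_n) : unit_vec v -> v != 0.
Proof.
move=> unit_v; apply/eqP => v0; move: unit_v.
rewrite /unit_vec v0 mulmx0 => /matrixP/(_ 0 0).
by rewrite !mxE eqxx /= => /eqP; rewrite eq_sym oner_eq0.
Qed.

Lemma unit_vec_scale n (a : C) (v : 'cV[C]_n) :
  unit_vec v -> unit_vec (a *: v) -> `|a| = 1.
Proof.
rewrite /unit_vec adjmxZ -scalemxAl -scalemxAr scalerA => ->.
move/matrixP => /(_ 0 0); rewrite !mxE eqxx /= mulr1 => aa.
by apply/eqP; rewrite -sqrp_eq1 // normCKC aa.
Qed.

Lemma eq_cols_mx n (u w : 'I_n -> 'cV[C]_n) :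
  (forall k, u k = w k) -> cols_mx u = cols_mx w.
Proof. by move=> uw; apply/matrixP => i j; rewrite !mxE uw. Qed.

Lemma mul_cols_mx n (A : 'M[C]_n) (u : 'I_n -> 'cV[C]_n) :
  A *m cols_mx u = cols_mx (fun k => A *m u k).
Proof. by apply/matrixP => i j; rewrite !mxE; apply: eq_bigr => l _; rewrite !mxE. Qed.

Lemma map_cols_mx n (f : {rmorphism C -> C}) (u : 'I_n -> 'cV[C]_n) :
  map_mx f (cols_mx u) = cols_mx (fun k => map_mx f (u k)).
Proof. by apply/matrixP => i j; rewrite !mxE. Qed.

Lemma cols_mx_scale n (a : 'I_n -> C) (u : 'I_n -> 'cV[C]_n) :
  cols_mx (fun k => a k *: u k) = cols_mx u *m diag_mx (\row_k a k).
Proof. by apply/matrixP => i j; rewrite mul_mx_diag !mxE mulrC. Qed.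

Lemma cols_mx_mulv n (u : 'I_n -> 'cV[C]_n) (x : 'cV[C]_n) :
  cols_mx u *m x = \sum_j x j 0 *: u j.
Proof.
apply/matrixP => i k; rewrite !mxE summxE; apply: eq_bigr => j _.
by rewrite !mxE ord1 mulrC.
Qed.

Section Eigenbasis.
Variables (n : nat) (g : 'M[C]_n) (a : 'I_n -> C) (v : 'I_n -> 'cV[C]_n).
Hypotheses (inj_a : injective a) (v_neq0 : forall k, v k != 0).
Hypothesis gv : forall k, g *m v k = a k *: v k.

Lemma cols_eigenvectors_unitmx : cols_mx v \in unitmx.
Proof.
pose M := (cols_mx v)^T.
have rowM j : row j M = (v j)^T by apply/rowP => l; rewrite !mxE.
have gM j : row j M *m g^T = a j *: row j M.
  by rewrite rowM -trmx_mul gv linearZ.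
suff : row_free M by rewrite row_free_unit unitmx_tr.
apply: inj_row_free => x xM0.
have dsum := @mxdirect_sum_eigenspace _ _ _ g^T predT a (in2W inj_a).
have [A_ _ _ uniq_dec] :=
  sub_dsumsmx dsum (sub0mx 1 (\sum_(i | predT i) eigenspace g^T (a i))%MS).
have dec0 := uniq_dec (fun _ => 0).
apply/rowP => j; rewrite mxE.
have : x 0 j *: row j M = 0.
  rewrite (uniq_dec (fun j => x 0 j *: row j M)) //.
  - by rewrite -dec0 // => [i _|]; [exact: sub0mx | rewrite big1].
  - by move=> i _; apply/eigenspaceP; rewrite -scalemxAl gM scalerA mulrC -scalerA.
  - by rewrite -mulmx_sum_row xM0.
move/eqP; rewrite scaler_eq0 => /orP[/eqP //|].
by rewrite rowM -(inj_eq (@trmx_inj _ _ _)) trmxK trmx0 (negbTE (v_neq0 j)).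
Qed.

Lemma eigenvector_colinear k (y : 'cV[C]_n) :
  g *m y = a k *: y -> exists c, y = c *: v k.
Proof.
move=> gy; pose V := cols_mx v; pose x := invmx V *m y.
have V_unit : V \in unitmx by exact: cols_eigenvectors_unitmx.
have Vx : V *m x = y by rewrite mulKVmx.
have gV : g *m V = V *m diag_mx (\row_j a j).
  by rewrite mul_cols_mx -cols_mx_scale; apply: eq_cols_mx.
have Dx : diag_mx (\row_j a j) *m x = a k *: x.
  apply: (can_inj (mulKmx V_unit)).
  by rewrite mulmxA -gV -mulmxA Vx gy -scalemxAr Vx.
have x0 j : j != k -> x j 0 = 0.
  move=> jk; move/matrixP: Dx => /(_ j 0); rewrite mul_diag_mx !mxE => /eqP.
  rewrite -subr_eq0 -mulrBl mulf_eq0 subr_eq0 => /orP[/eqP ajk|/eqP //].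
  by rewrite (inj_a ajk) eqxx in jk.
exists (x k 0); rewrite -Vx cols_mx_mulv (bigD1 k) //= big1 ?addr0 // => j jk.
by rewrite x0 // scale0r.
Qed.

End Eigenbasis.

Definition conj_by n (W : 'M[C]_n) (x : 'cV[C]_n) : 'cV[C]_n :=
  adjmx W *m map_mx Num.conj (W *m x).

Section ConjugationBy.
Variables (n : nat) (W : 'M[C]_n).
Hypothesis W_unitary : unitary_mx W.

Lemma conj_by_unit_vec x : unit_vec x -> unit_vec (conj_by W x).
Proof.
case: W_unitary => WW1 WW2; rewrite /unit_vec /conj_by => unit_x.
rewrite adjmxM adjmxK adjmx_conj mulmxA -[_ *m W *m _]mulmxA WW2 mulmx1.
have -> : (W *m x)^T = map_mx Num.conj (adjmx (W *m x)) by rewrite /adjmx map_mxCK.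
by rewrite -map_mxM adjmxM -mulmxA [adjmx W *m _]mulmxA WW1 mul1mx unit_x map_mx1.
Qed.

Lemma conj_by_eigenvector (S T : 'M[C]_n) x l :
  symmetric_mx S -> T = adjmx W *m S *m W -> T *m x = l *: x ->
  adjmx T *m conj_by W x = Num.conj l *: conj_by W x.
Proof.
case: W_unitary => _ WW2 symS defT Tx.
have SW : S *m W = W *m T by rewrite defT !mulmxA WW2 mul1mx.
have -> : adjmx T = adjmx W *m map_mx Num.conj S *m W.
  by rewrite defT !adjmxM adjmxK mulmxA /adjmx symS.
rewrite /conj_by !mulmxA -[_ *m W *m adjmx W]mulmxA WW2 mulmx1.
by rewrite -mulmxA -map_mxM mulmxA SW -mulmxA Tx -scalemxAr map_mxZ scalemxAr.
Qed.

Lemma norm_det_cols_conj_by (u : 'I_n -> 'cV[C]_n) :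
  `|\det (cols_mx (fun k => conj_by W (u k)))| = `|\det (cols_mx u)|.
Proof.
rewrite /conj_by -mul_cols_mx -map_cols_mx -mul_cols_mx.
rewrite det_mulmx /adjmx !det_map_mx det_tr !normrM !norm_conjC det_mulmx normrM.
by rewrite (norm_det_unitary W_unitary) !mul1r.
Qed.

End ConjugationBy.

End ComplexMatrices.

Theorem corollary2 (R : realType) (n : nat) (T : 'M[R[i]]_n)
  (lambda : 'I_n -> R[i]) (u v : 'I_n -> 'cV[R[i]]_n) :
  injective lambda ->
  (forall k, unit_vec (u k)) ->
  (forall k, T *m u k = lambda k *: u k) ->
  (forall k, unit_vec (v k)) ->
  (forall k, adjmx T *m v k = Num.conj (lambda k) *: v k) ->
  `|\det (cols_mx u)| != `|\det (cols_mx v)| ->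
  ~ (exists S : 'M[R[i]]_n, symmetric_mx S /\ unitarily_equivalent T S).
Proof.
move=> inj_l unit_u Tu unit_v Tv /negP det_neq [S [symS [W [W_unitary defT]]]].
apply: det_neq; apply/eqP.
have inj_cl : injective (fun k => Num.conj (lambda k)).
  by move=> j k /(can_inj (@conjCK _)) /inj_l.
have /fin_all_exists [c Cu] : forall k, exists c, conj_by W (u k) = c *: v k.
  move=> k; apply: (eigenvector_colinear inj_cl (fun k => unit_vec_neq0 (unit_v k)) Tv).
  exact: conj_by_eigenvector W_unitary _ _ _ _ symS defT (Tu k).
have norm_c k : `|c k| = 1.
  have := conj_by_unit_vec W_unitary (unit_u k).
  by rewrite Cu; apply: unit_vec_scale (unit_v k).
rewrite -(norm_det_cols_conj_by W_unitary) (eq_cols_mx Cu) cols_mx_scale.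
rewrite det_mulmx det_diag normrM normr_prod big1 ?mulr1 // => k _.
by rewrite mxE norm_c.
Qed.
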